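(* For positive integers $k\le n$: $\theta_k(\ell_1,\ell_2)\le \sqrt{n}^{\,k}$; $\theta_k(\ell_1,\ell_\infty)\le n^k$; $\theta_k(\ell_2,\ell_1)\le (n/k)^{k/2}$; $\theta_k(\ell_2,\ell_\infty)\le (n/k)^{k/2}\sqrt{n}^{\,k}$; $\theta_k(\ell_\infty,\ell_1)\le \binom nk (k+1)^{(k-1)/2}$ if $k<n$ and $\le \sqrt n^{\,n}$ if $k=n$; $\theta_k(\ell_\infty,\ell_2)\le \binom nk (k+1)^{(k-1)/2}$ if $k<n$ and $\le \sqrt n^{\,n}$ if $k=n$.
   Context: $C_k(B)$ is the $k$th compound of $B\in\mathbb{C}^{n\times n}$ (the $\binom nk\times\binom nk$ matrix of $k\times k$ minors $\det B(\alpha|\beta)$). $\theta_k(\mu,\nu)=\max\{\mu(C_k(B)): B\in\mathbb{C}^{n\times n},\ \nu(\mathrm{col}_i(B))=1,\ i=1,\ldots,n\}$, with $\mathrm{col}_i(B)$ the $i$th column. In $\theta_k(\ell_p,\ell_q)$, the first argument $\ell_p$ denotes the matrix operator norm induced by the vector $\ell_p$ norm (applied to $C_k(B)$), and the second denotes the vector $\ell_q$ norm (applied to columns of $B$). *)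

From HB Require Import structures.
From mathcomp Require Import all_boot all_order all_algebra.
From mathcomp Require Import classical_sets reals.
From mathcomp Require Import complex.
Set Implicit Arguments.
Unset Strict Implicit.
Unset Printing Implicit Defensive.
Import Order.TTheory GRing.Theory Num.Theory.
Local Open Scope ring_scope.
Local Open Scope classical_set_scope.

Definition cabs {R : realType} (z : R[i]) : R :=
  let: Complex a b := z in Num.sqrt (a ^+ 2 + b ^+ 2).

Inductive lp := l1 | l2 | linf.

Definition vnorm {R : realType} (p : lp) {n : nat} (x : 'cV[R[i]]_n) : R :=
  match p with
  | l1 => \sum_(i < n) cabs (x i 0)
  | l2 => Num.sqrt (\sum_(i < n) cabs (x i 0) ^+ 2)
  | linf => \big[Num.max/0]_(i < n) cabs (x i 0)
  end.

Definition opnorm {R : realType} (p : lp) {m n : nat} (A : 'M[R[i]]_(m, n)) : R :=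
  sup [set vnorm p (A *m x) | x in [set x : 'cV[R[i]]_n | vnorm p x = 1]].

Definition ksub (n k : nat) := {S : {set 'I_n} | #|S| == k}.

(* increasing enumeration 'I_k -> 'I_n of a k-subset *)
Definition ksub_idx {n k : nat} (a : ksub n k) (i : 'I_k) : 'I_n :=
  @enum_val _ (mem (val a)) (cast_ord (esym (eqP (valP a))) i).

(* k-th compound matrix: the matrix of k x k minors det B(alpha|beta),
   rows and columns indexed by the k-subsets of {0..n-1} (listed in the
   fixed enumeration order of the finite type ksub n k). *)
Definition compound {R : realType} (k : nat) {n : nat} (B : 'M[R[i]]_n)
  : 'M[R[i]]_#|{: ksub n k}| :=
  \matrix_(i, j) \det (mxsub (ksub_idx (enum_val i)) (ksub_idx (enum_val j)) B).

Definition theta {R : realType} (n k : nat) (mu nu : lp) : R :=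
  sup [set opnorm mu (compound k B) |
       B in [set B : 'M[R[i]]_n | forall i : 'I_n, vnorm nu (col i B) = 1]].

From HB Require Import structures.
From mathcomp Require Import all_boot all_order all_algebra.
From mathcomp Require Import classical_sets reals.
From mathcomp Require Import complex.
From mathcomp Require Import perm sesquilinear spectral.
Import Order.TTheory GRing.Theory Num.Theory.
Local Open Scope ring_scope.
Set Implicit Arguments.
Unset Strict Implicit.
Unset Printing Implicit Defensive.

(* The l1 (resp. l-infinity) operator norm of C_k(B) is its largest column (resp. row)
   sum of moduli.  Expanding each minor by the Leibniz formula, the moduli in the column
   of C_k(B) indexed by beta sum to at most the product over j in beta of the l1 norms of
   the columns of B; when these norms are at most 1 every entry of C_k(B) is at most 1,
   and the same holds for unit l2 columns since |det M|^2 <= (tr(M^* M) / k)^k for a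
   k x k matrix M (AM-GM on the eigenvalues of M^* M).  For the l2 operator norm write
   B^* B = P^* diag(d) P with P unitary: C_k is multiplicative (Cauchy-Binet),
   so C_k(B)^* C_k(B) = C_k(P)^* diag(prod_(j in alpha) d_j) C_k(P) with C_k(P) unitary,
   and by AM-GM each product is at most (tr(B^* B) / k)^k.  The column normalisations
   bound tr(B^* B) by n or n^2, and the row sums of C_k(B) by binomial(n, k). *)

Section KSubsets.
Variables n k : nat.

Lemma ksub_idxP (a : ksub n k) i : ksub_idx a i \in val a.
Proof. exact: enum_valP. Qed.

Lemma ksub_idx_inj (a : ksub n k) : injective (ksub_idx a).
Proof. by move=> i j /enum_val_inj /cast_ord_inj. Qed.

Lemma imset_ksub_idx (a : ksub n k) : [set ksub_idx a i | i : 'I_k] = val a.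
Proof.
apply/eqP; rewrite eqEcard card_imset; last exact: ksub_idx_inj.
rewrite card_ord (eqP (valP a)) leqnn andbT.
by apply/fintype.subsetP => _ /imsetP[i _ ->]; exact: ksub_idxP.
Qed.

Lemma ksub_idx_notin (a b : ksub n k) : a != b -> exists t, ksub_idx a t \notin val b.
Proof.
move=> neq_ab; apply/existsP; apply: contraR neq_ab; rewrite negb_exists => /forallP sub_ab.
apply/eqP/val_inj/eqP; rewrite eqEcard (eqP (valP a)) (eqP (valP b)) leqnn andbT.
rewrite -imset_ksub_idx; apply/fintype.subsetP => _ /imsetP[t _ ->].
by rewrite -[_ \in _]negbK.
Qed.

Lemma card_ksub : #|{: ksub n k}| = 'C(n, k).
Proof.
rewrite card_sig -[n in 'C(n, _)]card_ord -card_draws.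
by apply: eq_card => A; rewrite !inE.
Qed.

Lemma sum_ksub_enum_val (V : nmodType) (F : ksub n k -> V) :
  \sum_(l < #|{: ksub n k}|) F (enum_val l) = \sum_a F a.
Proof. by rewrite -big_enum_val. Qed.

(* Every injection 'I_k -> 'I_n is, uniquely, the increasing enumeration of its
   image composed with a permutation of 'I_k. *)
Definition ksub_perm_ffun (p : ksub n k * {perm 'I_k}) : {ffun 'I_k -> 'I_n} :=
  [ffun i => ksub_idx p.1 (p.2 i)].

Lemma ksub_perm_ffun_inj : injective ksub_perm_ffun.
Proof.
move=> [a s] [b t] eq_st.
have im_eq (p : ksub n k * {perm 'I_k}) : [set ksub_perm_ffun p i | i : 'I_k] = val p.1.
  rewrite -imset_ksub_idx; apply/setP => x; apply/imsetP/imsetP => -[i _ ->].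
    by exists (p.2 i); rewrite ?ffunE.
  by exists ((p.2)^-1 i)%g; rewrite ?ffunE ?permKV.
have eq_ab : a = b by apply: val_inj; rewrite -(im_eq (a, s)) -(im_eq (b, t)) eq_st.
subst b; congr pair; apply/permP => i.
apply/(@ksub_idx_inj a).
by have := congr1 (fun f : {ffun _ -> _} => f i) eq_st; rewrite !ffunE.
Qed.

Lemma image_ksub_perm_ffun :
  [set ksub_perm_ffun p | p : ksub n k * {perm 'I_k}] =
  [set f : {ffun 'I_k -> 'I_n} | injectiveb f].
Proof.
apply/eqP; rewrite eqEcard card_imset; last exact: ksub_perm_ffun_inj.
rewrite card_inj_ffuns card_prod card_ksub card_Sn !card_ord bin_ffact leqnn andbT.
apply/fintype.subsetP => _ /imsetP[p _ ->]; rewrite inE; apply/injectiveP => i j.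
by rewrite !ffunE => /ksub_idx_inj /perm_inj.
Qed.

End KSubsets.

Section CauchyBinet.
Variables (F : comPzRingType) (n k : nat).

Lemma det_rowsub_ksub_perm_ffun (Y : 'M[F]_(n, k)) p :
  \det (rowsub (ksub_perm_ffun p) Y) = (-1) ^+ p.2 * \det (rowsub (ksub_idx p.1) Y).
Proof.
have -> : rowsub (ksub_perm_ffun p) Y = row_perm p.2 (rowsub (ksub_idx p.1) Y).
  by apply/matrixP => i j; rewrite !mxE ffunE.
by rewrite row_permE det_mulmx det_perm.
Qed.

Lemma det_mulmx_ffun (X : 'M[F]_(k, n)) (Y : 'M[F]_(n, k)) :
  \det (X *m Y) = \sum_(f : {ffun 'I_k -> 'I_n}) (\prod_i X i (f i)) * \det (rowsub f Y).
Proof.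
rewrite [LHS]/determinant.
under eq_bigr => s _ do under eq_bigr => i _ do rewrite mxE.
under eq_bigr => s _ do rewrite bigA_distr_bigA /= mulr_sumr.
rewrite exchange_big /=; apply: eq_bigr => f _.
rewrite /determinant mulr_sumr; apply: eq_bigr => s _.
by rewrite mulrCA big_split /=; congr (_ * (_ * _)); apply: eq_bigr => i _; rewrite mxE.
Qed.

(* Only injective f contribute to det_mulmx_ffun: otherwise rowsub f Y has two equal rows. *)
Lemma cauchy_binet (X : 'M[F]_(k, n)) (Y : 'M[F]_(n, k)) :
  \det (X *m Y) =
    \sum_(a : ksub n k) \det (colsub (ksub_idx a) X) * \det (rowsub (ksub_idx a) Y).
Proof.
pose G (f : {ffun 'I_k -> 'I_n}) := (\prod_i X i (f i)) * \det (rowsub f Y).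
rewrite det_mulmx_ffun -/G (bigID (fun f : {ffun 'I_k -> 'I_n} => injectiveb f)) /=.
rewrite [X in _ + X]big1 ?addr0; last first.
  move=> f /injectivePn[i [j neq_ij eq_fij]].
  by rewrite /G (determinant_alternate neq_ij) ?mulr0 // => l; rewrite !mxE eq_fij.
rewrite -big_set /= -image_ksub_perm_ffun big_imset /=; last first.
  by move=> p q _ _; exact: ksub_perm_ffun_inj.
rewrite -(pair_bigA _ (fun a s => G (ksub_perm_ffun (a, s)))) /=.
apply: eq_bigr => a _; rewrite [X in X * _]/determinant mulr_suml; apply: eq_bigr => s _.
rewrite /G det_rowsub_ksub_perm_ffun /= mulrA [_ * (-1) ^+ _]mulrC.
by congr (_ * _ * _); apply: eq_bigr => i _; rewrite !mxE ffunE.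
Qed.

End CauchyBinet.

Section Modulus.
Variable R : realType.
Implicit Types z : R[i].

Lemma normC_cabs z : `|z| = (cabs z)%:C%C.
Proof. by case: z => a b; rewrite normc_def. Qed.

Lemma cabs_ge0 z : 0 <= cabs z.
Proof. by rewrite -ler0c -normC_cabs normr_ge0. Qed.

Lemma cabsM z1 z2 : cabs (z1 * z2) = cabs z1 * cabs z2.
Proof. by apply: complexI; rewrite rmorphM -!normC_cabs normrM. Qed.

Lemma cabs_sum (I : finType) (F : I -> R[i]) : cabs (\sum_i F i) <= \sum_i cabs (F i).
Proof.
by rewrite -lecR rmorph_sum -normC_cabs (le_trans (ler_norm_sum _ _ _)).
Qed.

Lemma cabs_prod (I : finType) (F : I -> R[i]) : cabs (\prod_i F i) = \prod_i cabs (F i).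
Proof.
apply: complexI; rewrite -normC_cabs normr_prod rmorph_prod.
by rewrite (eq_bigr _ (fun i _ => normC_cabs (F i))).
Qed.

Lemma cabs_signr (b : bool) z : cabs ((-1) ^+ b * z) = cabs z.
Proof. by apply: complexI; rewrite -!normC_cabs normrM normrX normrN1 expr1n mul1r. Qed.

Lemma mul_conjC_cabs z : Num.conj z * z = (cabs z ^+ 2)%:C%C.
Proof. by rewrite mulrC -normCK normC_cabs rmorphXn. Qed.

End Modulus.

Section RealInequalities.
Variable R : realFieldType.

Lemma ler_sum_inj (I J : finType) (f : I -> J) (h : J -> R) :
  injective f -> (forall j, 0 <= h j) -> \sum_i h (f i) <= \sum_j h j.
Proof.
move=> f_inj h_ge0; rewrite -(big_imset h (in2W f_inj)) /=.
by rewrite [leRHS](bigID [in f @: predT]) /= lerDl sumr_ge0.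
Qed.

Lemma prod_inj_le_mean k n (d : 'I_n -> R) (f : 'I_k -> 'I_n) (T : R) :
  (0 < k)%N -> injective f -> (forall j, 0 <= d j) -> \sum_j d j <= T ->
  \prod_t d (f t) <= (T / k%:R) ^+ k.
Proof.
move=> k_gt0 f_inj d_ge0 sum_le.
have := (leif_AGM (A := predT) (E := d \o f) (fun t _ => d_ge0 (f t))).1.
rewrite cardE /= size_enum_ord => /le_trans; apply.
have sum_f_le : \sum_t d (f t) <= T by apply: le_trans sum_le; exact: ler_sum_inj.
have T_ge0 : 0 <= T by apply: le_trans sum_f_le; exact: sumr_ge0.
rewrite lerXn2r ?nnegrE ?divr_ge0 ?ler0n ?sumr_ge0 //.
by rewrite ler_wpM2r ?invr_ge0 ?ler0n.
Qed.

Lemma sqr_sum_le n (a : 'I_n -> R) : (\sum_i a i) ^+ 2 <= n%:R * \sum_i a i ^+ 2.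
Proof.
rewrite -(ler_pMn2r (isT : (0 < 2)%N)) [X in X *+ 2 <= _]expr2 mulr_suml -sumrMnl.
apply: le_trans (_ : \sum_i \sum_j (a i ^+ 2 + a j ^+ 2) <= _).
  apply: ler_sum => i _; rewrite mulr_sumr -sumrMnl; apply: ler_sum => j _.
  exact: (leif_mean_square_scaled (a i) (a j)).1.
rewrite mulr2n; under eq_bigr do rewrite big_split /= sumr_const card_ord.
by rewrite big_split /= sumrMnl sumr_const card_ord !mulr_natl.
Qed.

Lemma sum_sqr_le_sqr_sum (I : finType) (a : I -> R) :
  (forall i, 0 <= a i) -> \sum_i a i ^+ 2 <= (\sum_i a i) ^+ 2.
Proof.
move=> a_ge0; rewrite expr2 mulr_suml; apply: ler_sum => i _.
by rewrite expr2 ler_wpM2l // (bigD1 i) //= lerDl sumr_ge0.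
Qed.

End RealInequalities.

Lemma sqrtrX (R : rcfType) (x : R) k : 0 <= x -> Num.sqrt (x ^+ k) = Num.sqrt x ^+ k.
Proof.
by move=> x_ge0; elim: k => [|k IHk]; rewrite ?sqrtr1 // !exprS sqrtrM ?IHk.
Qed.

Section Adjoint.
Variable C : numClosedFieldType.
Local Open Scope sesquilinear_scope.

Lemma trmxC_mul m p q (A : 'M[C]_(m, p)) (B : 'M[C]_(p, q)) :
  (A *m B) ^t* = B ^t* *m A ^t*.
Proof. by rewrite trmx_mul map_mxM. Qed.

Lemma unitarymx_trmxC_mul n (Q : 'M[C]_n) : Q \is unitarymx -> Q ^t* *m Q = 1%:M.
Proof. by move=> Q_unitary; rewrite -[_ *m _]mul1mx mulmxA mulmxKtV. Qed.

End Adjoint.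

Section CompoundAlgebra.
Variables (R : realType) (n k : nat).
Local Notation C := R[i].
Local Notation Ck := (@compound R k n).
Local Open Scope sesquilinear_scope.

Lemma compoundE (B : 'M[C]_n) i j :
  Ck B i j = \det (mxsub (ksub_idx (enum_val i)) (ksub_idx (enum_val j)) B).
Proof. exact: mxE. Qed.

Lemma compoundM (X Y : 'M[C]_n) : Ck (X *m Y) = Ck X *m Ck Y.
Proof.
apply/matrixP => i j; rewrite !mxE mxsub_mul cauchy_binet -sum_ksub_enum_val.
by apply: eq_bigr => l _; rewrite !mxE -mxsubcr -mxsubrc.
Qed.

Lemma compound_trmxC (B : 'M[C]_n) : Ck (B ^t*) = (Ck B) ^t*.
Proof.
apply/matrixP => i j; rewrite !mxE -det_tr -det_map_mx; congr (\det _).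
by apply/matrixP => r c; rewrite !mxE.
Qed.

Lemma compound_diag (d : 'rV[C]_n) :
  Ck (diag_mx d) = diag_mx (\row_i \prod_t d 0 (ksub_idx (enum_val i) t)).
Proof.
apply/matrixP => i j; rewrite !mxE; have [<-|neq_ij] := eqVneq i j.
  rewrite mulr1n (_ : mxsub _ _ _ = diag_mx (\row_t d 0 (ksub_idx (enum_val i) t))).
    by rewrite det_diag; apply: eq_bigr => t _; rewrite mxE.
  apply/matrixP => r c; rewrite !mxE (inj_eq (@ksub_idx_inj _ _ _)).
  by case: eqVneq => [->|]; rewrite ?mulr1n ?mulr0n.
have [t t_notin] : exists t, ksub_idx (enum_val i) t \notin val (enum_val j).
  by apply: ksub_idx_notin; apply: contraNneq neq_ij => /enum_val_inj ->.
rewrite mulr0n (expand_det_row _ t) big1 // => c _; rewrite !mxE.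
case: eqVneq => [eq_tc|]; last by rewrite mulr0n mul0r.
by rewrite eq_tc ksub_idxP in t_notin.
Qed.

Lemma compound1 : Ck 1%:M = 1%:M.
Proof.
rewrite -diag_const_mx compound_diag -diag_const_mx; congr diag_mx.
by apply/rowP => i; rewrite !mxE big1 // => t _; rewrite mxE.
Qed.

Lemma compound_unitary (P : 'M[C]_n) : P \is unitarymx -> Ck P \is unitarymx.
Proof.
move=> /unitarymxP P_unitary; apply/unitarymxP.
by rewrite -compound_trmxC -compoundM P_unitary compound1.
Qed.

End CompoundAlgebra.

Definition sqfrobenius {R : realType} {m n : nat} (B : 'M[R[i]]_(m, n)) : R :=
  \sum_j \sum_i cabs (B i j) ^+ 2.

Section Gram.
Variable R : realType.
Local Notation C := R[i].
Local Open Scope sesquilinear_scope.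

Lemma trmxC_mul_diagE m n (A : 'M[C]_(m, n)) j :
  (A ^t* *m A) j j = (\sum_i cabs (A i j) ^+ 2)%:C%C.
Proof. by rewrite mxE rmorph_sum; apply: eq_bigr => i _; rewrite !mxE mul_conjC_cabs. Qed.

Lemma quad_diag_mxE n (y : 'cV[C]_n) (e : 'I_n -> R) :
  (y ^t* *m diag_mx (\row_l (e l)%:C%C) *m y) 0 0 = (\sum_l e l * cabs (y l 0) ^+ 2)%:C%C.
Proof.
rewrite mul_mx_diag mxE rmorph_sum; apply: eq_bigr => l _.
by rewrite !mxE mulrAC mul_conjC_cabs mulrC -rmorphM.
Qed.

Lemma sum_sqr_cabs_unitary n (Q : 'M[C]_n) (x : 'cV[C]_n) : Q \is unitarymx ->
  \sum_i cabs ((Q *m x) i 0) ^+ 2 = \sum_i cabs (x i 0) ^+ 2.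
Proof.
move=> Q_unitary; apply: complexI; rewrite -!trmxC_mul_diagE trmxC_mul mulmxA.
by rewrite -(mulmxA _ _ Q) unitarymx_trmxC_mul // mulmx1.
Qed.

Lemma gram_spectral m n (B : 'M[C]_(m, n)) : exists P : 'M[C]_n, exists d : 'I_n -> R,
  [/\ P \is unitarymx, forall j, 0 <= d j, \sum_j d j = sqfrobenius B &
      B ^t* *m B = P ^t* *m diag_mx (\row_j (d j)%:C%C) *m P].
Proof.
set G := B ^t* *m B; set P := spectralmx G.
have P_unitary : P \is unitarymx by exact: spectral_unitarymx.
have G_normal : G \is normalmx by apply/normalmxP; rewrite /G trmxC_mul trmxCK.
have := orthomx_spectralP G_normal; rewrite invmx_unitary // -/P => G_diag.
have PGP : P *m G *m P ^t* = diag_mx (spectral_diag G).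
  by rewrite [in LHS]G_diag !mulmxA (unitarymxP P_unitary) mul1mx mulmxtVK.
exists P, (fun j => \sum_r cabs ((B *m P ^t*) r j) ^+ 2); split => //.
- by move=> j; rewrite sumr_ge0 // => r _; rewrite exprn_ge0 ?cabs_ge0.
- apply: complexI; rewrite rmorph_sum /sqfrobenius rmorph_sum.
  rewrite (eq_bigr _ (fun j _ => esym (trmxC_mul_diagE _ j))).
  rewrite [RHS](eq_bigr _ (fun j _ => esym (trmxC_mul_diagE _ j))).
  rewrite [LHS](_ : _ = \tr (P *m G *m P ^t*)); last first.
    by rewrite /mxtrace; apply: eq_bigr => j _; rewrite trmxC_mul trmxCK !mulmxA.
  by rewrite mxtrace_mulC mulmxA unitarymx_trmxC_mul // mul1mx.
- rewrite [LHS]G_diag; congr (_ *m diag_mx _ *m _); apply/rowP => j.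
  rewrite mxE -trmxC_mul_diagE trmxC_mul trmxCK !mulmxA -(mulmxA P) -/G.
  by rewrite PGP mxE eqxx mulr1n.
Qed.

End Gram.

Section L2Bounds.
Variable R : realType.
Local Notation C := R[i].
Local Open Scope sesquilinear_scope.

Lemma sqr_cabs_det_le k (M : 'M[C]_k) (T : R) : (0 < k)%N -> sqfrobenius M <= T ->
  cabs (\det M) ^+ 2 <= (T / k%:R) ^+ k.
Proof.
move=> k_gt0 frob_le; have [P [d [P_unitary d_ge0 sum_d gramM]]] := gram_spectral M.
have -> : cabs (\det M) ^+ 2 = \prod_j d j.
  have conj_det : Num.conj (\det M) = \det (M ^t*) by rewrite det_map_mx det_tr.
  apply: complexI; rewrite -mul_conjC_cabs conj_det -det_mulmx gramM.
  rewrite !det_mulmx mulrAC -det_mulmx unitarymx_trmxC_mul // det1 mul1r.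
  by rewrite det_diag rmorph_prod; apply: eq_bigr => j _; rewrite mxE.
by apply: prod_inj_le_mean => //; rewrite sum_d.
Qed.

Lemma sum_sqr_compound_le n k (B : 'M[C]_n) (T : R) (x : 'cV[C]_#|{: ksub n k}|) :
  (0 < k)%N -> sqfrobenius B <= T ->
  \sum_i cabs ((compound k B *m x) i 0) ^+ 2 <= (T / k%:R) ^+ k * \sum_i cabs (x i 0) ^+ 2.
Proof.
move=> k_gt0 frob_le; have [P [d [P_unitary d_ge0 sum_d gramB]]] := gram_spectral B.
pose e (l : 'I_#|{: ksub n k}|) : R := \prod_(t < k) d (ksub_idx (enum_val l) t).
set Q := compound k P; set y := Q *m x.
have gram_compound :
    (compound k B) ^t* *m compound k B = Q ^t* *m diag_mx (\row_l (e l)%:C%C) *m Q.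
  rewrite -compound_trmxC -compoundM gramB !compoundM compound_trmxC compound_diag.
  congr (_ *m diag_mx _ *m _); apply/rowP => l; rewrite !mxE rmorph_prod.
  by apply: eq_bigr => t _; rewrite mxE.
have -> : \sum_i cabs ((compound k B *m x) i 0) ^+ 2 = \sum_l e l * cabs (y l 0) ^+ 2.
  apply: complexI; rewrite -trmxC_mul_diagE -quad_diag_mxE trmxC_mul mulmxA.
  by rewrite -(mulmxA _ _ (compound k B)) gram_compound /y trmxC_mul !mulmxA.
rewrite -(sum_sqr_cabs_unitary x (compound_unitary k P_unitary)) -/Q -/y mulr_sumr.
apply: ler_sum => l _; rewrite ler_wpM2r ?exprn_ge0 ?cabs_ge0 //.
by apply: prod_inj_le_mean => //; [exact: ksub_idx_inj | rewrite sum_d].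
Qed.

End L2Bounds.

Section EntryBounds.
Variables (R : realType) (n k : nat).
Local Notation C := R[i].
Implicit Types B : 'M[C]_n.

Lemma cabs_det_le m (M : 'M[C]_m) :
  cabs (\det M) <= \sum_(s : 'S_m) \prod_t cabs (M (s t) t).
Proof.
rewrite -det_tr (le_trans (cabs_sum _)) //; apply: ler_sum => s _.
by rewrite cabs_signr cabs_prod; under eq_bigr do rewrite mxE.
Qed.

Lemma sum_cabs_compound_col B j :
  \sum_i cabs (compound k B i j) <= \prod_t \sum_r cabs (B r (ksub_idx (enum_val j) t)).
Proof.
set b := ksub_idx (enum_val j).
pose H (f : {ffun 'I_k -> 'I_n}) := \prod_t cabs (B (f t) (b t)).
rewrite (eq_bigr _ (fun i _ => congr1 cabs (compoundE B i j))).
rewrite (sum_ksub_enum_val (fun a => cabs (\det (mxsub (ksub_idx a) b B)))).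
rewrite bigA_distr_bigA /=.
apply: le_trans (_ : \sum_(p : ksub n k * {perm 'I_k}) H (ksub_perm_ffun p) <= _); last first.
  apply: ler_sum_inj; first exact: ksub_perm_ffun_inj.
  by move=> f; apply: prodr_ge0 => t _; exact: cabs_ge0.
rewrite -(pair_bigA _ (fun a s => H (ksub_perm_ffun (a, s)))) /=.
apply: ler_sum => a _; rewrite (le_trans (cabs_det_le _)) //.
apply: ler_sum => s _; rewrite /H.
by under eq_bigr do rewrite mxE; under [leRHS]eq_bigr do rewrite ffunE.
Qed.

Lemma sum_cabs_compound_col_le B (c : R) :
  (forall j, \sum_i cabs (B i j) <= c) -> forall j, \sum_i cabs (compound k B i j) <= c ^+ k.
Proof.
move=> colsum_le j; rewrite (le_trans (sum_cabs_compound_col B j)) //.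
have -> : c ^+ k = \prod_(t < k) c by rewrite prodr_const card_ord.
apply: ler_prod => t _.
by rewrite sumr_ge0 => [|r _]; [exact: colsum_le | exact: cabs_ge0].
Qed.

Lemma cabs_compound_le1_l1 B : (forall j, \sum_i cabs (B i j) <= 1) ->
  forall i j, cabs (compound k B i j) <= 1.
Proof.
move=> colsum_le i j; rewrite -(expr1n _ k).
rewrite (le_trans _ (sum_cabs_compound_col_le colsum_le j)) //.
by rewrite (bigD1 i) //= lerDl sumr_ge0 // => l _; exact: cabs_ge0.
Qed.

Lemma cabs_compound_le1_l2 B : (0 < k)%N -> (forall j, \sum_i cabs (B i j) ^+ 2 <= 1) ->
  forall i j, cabs (compound k B i j) <= 1.
Proof.
move=> k_gt0 colsum_le i j; rewrite compoundE -(expr_le1 (n := 2)) ?cabs_ge0 //.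
set M := mxsub _ _ B.
have frob_le : sqfrobenius M <= k%:R.
  rewrite -[k in k%:R]card_ord -sumr_const; apply: ler_sum => t _.
  apply: le_trans (colsum_le (ksub_idx (enum_val j) t)); under eq_bigr do rewrite mxE.
  apply: (ler_sum_inj (h := fun r => cabs (B r _) ^+ 2)); first exact: ksub_idx_inj.
  by move=> r; rewrite exprn_ge0 ?cabs_ge0.
by rewrite (le_trans (sqr_cabs_det_le k_gt0 frob_le)) // divff ?pnatr_eq0 -?lt0n // expr1n.
Qed.

End EntryBounds.

Section OperatorNorms.
Variable R : realType.
Local Notation C := R[i].

Lemma ge0_ge_sup (E : set R) (c : R) : 0 <= c -> ubound E c -> sup E <= c.
Proof.
move=> c_ge0 ubE; have [->|/set0P E_neq0] := eqVneq E set0; first by rewrite sup0.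
exact: ge_sup.
Qed.

Lemma vnorm_ge0 p m (x : 'cV[C]_m) : 0 <= vnorm p x.
Proof.
case: p => /=; rewrite ?sqrtr_ge0 ?sumr_ge0 //; last first.
  by elim/big_ind: _ => // [a b a_ge0 b_ge0|i _]; rewrite ?le_max ?a_ge0 ?cabs_ge0.
by move=> i _; exact: cabs_ge0.
Qed.

Lemma opnorm_le p m (A : 'M[C]_m) (c : R) : 0 <= c ->
  (forall x, vnorm p (A *m x) <= c * vnorm p x) -> opnorm p A <= c.
Proof.
move=> c_ge0 Ax_le; apply: ge0_ge_sup => // _ [x /= x1 <-].
by rewrite -[c]mulr1 -x1 Ax_le.
Qed.

Lemma theta_le n k mu nu (c : R) : 0 <= c ->
  (forall B : 'M[C]_n, (forall i, vnorm nu (col i B) = 1) -> opnorm mu (compound k B) <= c) ->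
  theta n k mu nu <= c.
Proof. by move=> c_ge0 le_c; apply: ge0_ge_sup => // _ [B /= /le_c opnorm_le_c <-]. Qed.

Lemma vnorm_l1_mulmx_le m (A : 'M[C]_m) (c : R) x :
  (forall j, \sum_i cabs (A i j) <= c) -> vnorm l1 (A *m x) <= c * vnorm l1 x.
Proof.
move=> colsum_le; rewrite /= mulr_sumr.
apply: le_trans (_ : \sum_i \sum_j cabs (A i j) * cabs (x j 0) <= _).
  apply: ler_sum => i _; rewrite mxE (le_trans (cabs_sum _)) //.
  by under eq_bigr do rewrite cabsM.
rewrite exchange_big /=; apply: ler_sum => j _.
by rewrite -mulr_suml ler_wpM2r ?cabs_ge0.
Qed.

Lemma vnorm_linf_mulmx_le m (A : 'M[C]_m) (c : R) x : 0 <= c ->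
  (forall i, \sum_j cabs (A i j) <= c) -> vnorm linf (A *m x) <= c * vnorm linf x.
Proof.
move=> c_ge0 rowsum_le; apply: bigmax_le => [|i _]; first by rewrite mulr_ge0 ?vnorm_ge0.
rewrite mxE (le_trans (cabs_sum _)) //.
apply: le_trans (_ : \sum_j cabs (A i j) * vnorm linf x <= _); last first.
  by rewrite -mulr_suml ler_wpM2r ?vnorm_ge0.
apply: ler_sum => j _; rewrite cabsM ler_wpM2l ?cabs_ge0 //.
exact: (le_bigmax _ (fun l => cabs (x l 0))).
Qed.

Lemma vnorm_col_l1 n (B : 'M[C]_n) j : vnorm l1 (col j B) = \sum_i cabs (B i j).
Proof. by apply: eq_bigr => i _; rewrite mxE. Qed.

Lemma vnorm_col_l2 n (B : 'M[C]_n) j : vnorm l2 (col j B) ^+ 2 = \sum_i cabs (B i j) ^+ 2.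
Proof.
rewrite sqr_sqrtr ?sumr_ge0 // => [|i _]; last by rewrite exprn_ge0 ?cabs_ge0.
by apply: eq_bigr => i _; rewrite mxE.
Qed.

Lemma cabs_le_vnorm_col_linf n (B : 'M[C]_n) i j : cabs (B i j) <= vnorm linf (col j B).
Proof.
have -> : B i j = col j B i 0 by rewrite mxE.
exact: (le_bigmax _ (fun l => cabs (col j B l 0))).
Qed.

End OperatorNorms.

Section CompoundNorms.
Variables (R : realType) (n k : nat).
Local Notation C := R[i].
Implicit Types B : 'M[C]_n.

Lemma opnorm_l1_compound_le B (c : R) : 0 <= c ->
  (forall j, \sum_i cabs (B i j) <= c) -> opnorm l1 (compound k B) <= c ^+ k.
Proof.
move=> c_ge0 colsum_le; apply: opnorm_le => [|x]; first exact: exprn_ge0.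
by apply: vnorm_l1_mulmx_le; exact: sum_cabs_compound_col_le.
Qed.

Lemma opnorm_l2_compound_le B (T : R) : (0 < k)%N -> sqfrobenius B <= T ->
  opnorm l2 (compound k B) <= Num.sqrt (T / k%:R) ^+ k.
Proof.
move=> k_gt0 frob_le.
have T_ge0 : 0 <= T.
  by apply: le_trans frob_le; do 2!apply: sumr_ge0 => ? _; rewrite exprn_ge0 ?cabs_ge0.
apply: opnorm_le => [|x]; first by rewrite exprn_ge0 ?sqrtr_ge0.
rewrite /= -sqrtrX ?divr_ge0 ?ler0n // -sqrtrM ?exprn_ge0 ?divr_ge0 ?ler0n //.
by rewrite ler_wsqrtr // sum_sqr_compound_le.
Qed.

Lemma opnorm_linf_compound_le B : (forall i j, cabs (compound k B i j) <= 1) ->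
  opnorm linf (compound k B) <= 'C(n, k)%:R.
Proof.
move=> entry_le1; apply: opnorm_le => [|x]; first exact: ler0n.
apply: vnorm_linf_mulmx_le => [|i]; first exact: ler0n.
have -> : 'C(n, k)%:R = \sum_(j < #|{: ksub n k}|) (1 : R).
  by rewrite sumr_const card_ord card_ksub.
exact: ler_sum.
Qed.

End CompoundNorms.

Section Theta.
Variables (R : realType) (n k : nat).

Lemma theta_l1_l2_le : theta n k l1 l2 <= Num.sqrt (n%:R : R) ^+ k.
Proof.
apply: theta_le => [|B unit_cols]; first by rewrite exprn_ge0 ?sqrtr_ge0.
apply: opnorm_l1_compound_le => [|j]; first exact: sqrtr_ge0.
have colsum_ge0 : 0 <= \sum_i cabs (B i j) by rewrite sumr_ge0 // => i _; exact: cabs_ge0.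
rewrite -[leLHS]ger0_norm // -sqrtr_sqr ler_wsqrtr // (le_trans (sqr_sum_le _)) //.
by rewrite -vnorm_col_l2 unit_cols expr1n mulr1.
Qed.

Lemma theta_l1_linf_le : theta n k l1 linf <= (n%:R : R) ^+ k.
Proof.
apply: theta_le => [|B unit_cols]; first by rewrite exprn_ge0 ?ler0n.
apply: opnorm_l1_compound_le => [|j]; first exact: ler0n.
rewrite -[n in n%:R]card_ord -sumr_const; apply: ler_sum => i _.
by rewrite -(unit_cols j) cabs_le_vnorm_col_linf.
Qed.

Lemma sqfrobenius_le_l1_cols (B : 'M[R[i]]_n) : (forall j, vnorm l1 (col j B) = 1) ->
  sqfrobenius B <= n%:R.
Proof.
move=> unit_cols; rewrite -[n in n%:R]card_ord -sumr_const; apply: ler_sum => j _.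
rewrite -(expr1n _ 2) -(unit_cols j) vnorm_col_l1.
by apply: sum_sqr_le_sqr_sum => i; exact: cabs_ge0.
Qed.

Lemma theta_l2_l1_le : (0 < k)%N -> theta n k l2 l1 <= Num.sqrt (n%:R / k%:R : R) ^+ k.
Proof.
move=> k_gt0; apply: theta_le => [|B unit_cols]; first by rewrite exprn_ge0 ?sqrtr_ge0.
exact/opnorm_l2_compound_le/sqfrobenius_le_l1_cols.
Qed.

Lemma theta_l2_linf_le : (0 < k)%N ->
  theta n k l2 linf <= Num.sqrt (n%:R / k%:R : R) ^+ k * Num.sqrt (n%:R : R) ^+ k.
Proof.
move=> k_gt0; apply: theta_le => [|B unit_cols].
  by rewrite mulr_ge0 ?exprn_ge0 ?sqrtr_ge0.
rewrite -exprMn -sqrtrM ?divr_ge0 ?ler0n // mulrAC; apply: opnorm_l2_compound_le => //.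
have -> : (n%:R * n%:R : R) = \sum_(j < n) \sum_(i < n) 1.
  by rewrite !sumr_const card_ord mulr_natl.
apply: ler_sum => j _; apply: ler_sum => i _.
by rewrite expr_le1 ?cabs_ge0 // -(unit_cols j) cabs_le_vnorm_col_linf.
Qed.

Lemma theta_linf_l1_le : theta n k linf l1 <= 'C(n, k)%:R :> R.
Proof.
apply: theta_le => [|B unit_cols]; first exact: ler0n.
apply/opnorm_linf_compound_le/cabs_compound_le1_l1 => j.
by rewrite -vnorm_col_l1 unit_cols.
Qed.

Lemma theta_linf_l2_le : (0 < k)%N -> theta n k linf l2 <= 'C(n, k)%:R :> R.
Proof.
move=> k_gt0; apply: theta_le => [|B unit_cols]; first exact: ler0n.
apply/opnorm_linf_compound_le/cabs_compound_le1_l2 => // j.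
by rewrite -vnorm_col_l2 unit_cols expr1n.
Qed.

End Theta.

Lemma binomial_le_sqrt_bound (R : realType) n k : (k <= n)%N ->
  ('C(n, k)%:R : R) <=
    (if (k < n)%N then 'C(n, k)%:R * Num.sqrt ((k.+1)%:R : R) ^+ k.-1
     else Num.sqrt (n%:R : R) ^+ n).
Proof.
move=> le_kn; case: ltnP => [_|le_nk].
  by rewrite ler_peMr ?ler0n // exprn_ege1 // -[leLHS]sqrtr1 ler_wsqrtr // ler1n.
have -> : k = n by apply/eqP; rewrite eqn_leq le_kn.
rewrite binn; case: n {le_kn le_nk} => [|n]; first by rewrite expr0.
by rewrite exprn_ege1 // -[leLHS]sqrtr1 ler_wsqrtr // ler1n.
Qed.

Unset Implicit Arguments.

Theorem corollary2p13 (R : realType) (n k : nat) :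
  (0 < k)%N -> (k <= n)%N ->
  (theta n k l1 l2 <= Num.sqrt (n%:R : R) ^+ k) /\
      (theta n k l1 linf <= (n%:R : R) ^+ k) /\
      (theta n k l2 l1 <= Num.sqrt ((n%:R : R) / k%:R) ^+ k) /\
      (theta n k l2 linf <= Num.sqrt ((n%:R : R) / k%:R) ^+ k * Num.sqrt (n%:R : R) ^+ k) /\
      (theta n k linf l1 <=
        ((if (k < n)%N then 'C(n, k)%:R * Num.sqrt ((k.+1)%:R : R) ^+ k.-1
         else Num.sqrt (n%:R : R) ^+ n))) /\
    (theta n k linf l2 <=
        ((if (k < n)%N then 'C(n, k)%:R * Num.sqrt ((k.+1)%:R : R) ^+ k.-1
         else Num.sqrt (n%:R : R) ^+ n))).
Proof.
move=> k_gt0 le_kn; have binomial_le := binomial_le_sqrt_bound R le_kn.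
split; first exact: theta_l1_l2_le.
split; first exact: theta_l1_linf_le.
split; first exact: theta_l2_l1_le.
split; first exact: theta_l2_linf_le.
split; first exact: le_trans (theta_linf_l1_le R n k) binomial_le.
exact: le_trans (theta_linf_l2_le R n k_gt0) binomial_le.
Qed.
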